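(* Let $M$ be a strongly primary monoid in $\mathcal{C}$ and let $V=\mathbb{R}\otimes_\mathbb{Z}\mathrm{gp}(M)$. The following are equivalent: (a) $\mathcal{M}(M)<\infty$; (b) $\dim\mathsf{cone}_V(M)=1$; (c) $M$ is isomorphic to a numerical monoid.
   Context: Convention: all monoids are commutative, cancellative, and reduced, written additively; $M^\bullet=M\setminus\{0\}$; atoms $\mathcal{A}(M)=M^\bullet\setminus(M^\bullet+M^\bullet)$. $\mathcal{C}$ is the class of monoids isomorphic to a submonoid of a free commutative monoid of finite rank (equivalently, of $(\mathbb{N}^d,+)$). $M$ is regarded as a submonoid of $V$; $\mathsf{cone}_V(M)$ is the set of finite nonnegative linear combinations of elements of $M$. A monoid is primary if it is nontrivial and for all $x,y\in M^\bullet$ there is $n\in\mathbb{N}$ with $ny\in x+M$; it is a BFM if every element is a sum of atoms and each element has finitely many factorization lengths; it is finitary if it is a BFM and there exist a finite $S\subseteq M$ and a positive integer $n$ with $nM^\bullet\subseteq S+M$ (where $nM^\bullet=\{x_1+\dots+x_n:x_i\in M^\bullet\}$); strongly primary means primary and finitary. For $x\in M^\bullet$, $\mathcal{M}(x)$ is the smallest $n\in\mathbb{N}$ with $nM^\bullet\subseteq x+M$ ($\infty$ if none), and $\mathcal{M}(M)=\sup\{\mathcal{M}(a): a\in\mathcal{A}(M)\}\in\mathbb{N}\cup\{\infty\}$. A numerical monoid is a submonoid of $(\mathbb{N},+)$ with finite complement in $\mathbb{N}$. *)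

From HB Require Import structures.
From mathcomp Require Import all_boot all_order all_algebra.
Set Implicit Arguments. Unset Strict Implicit. Unset Printing Implicit Defensive.
Import Order.TTheory GRing.Theory Num.Theory.

(* Elements of the free commutative monoid N^d, as finite functions 'I_d -> nat. *)
Definition vec (d : nat) := {ffun 'I_d -> nat}.
Definition vzero (d : nat) : vec d := [ffun => 0%N].
Definition vadd (d : nat) (x y : vec d) : vec d := [ffun i => (x i + y i)%N].
Definition vsum (d : nat) (l : seq (vec d)) : vec d := foldr (@vadd d) (vzero d) l.

Definition is_submonoid (d : nat) (M : vec d -> Prop) : Prop :=
  M (vzero d) /\ (forall x y, M x -> M y -> M (vadd x y)).

Definition nonzero_in (d : nat) (M : vec d -> Prop) (x : vec d) : Prop :=
  M x /\ x <> vzero d.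

Definition is_atom (d : nat) (M : vec d -> Prop) (a : vec d) : Prop :=
  nonzero_in M a /\ ~ (exists x y, nonzero_in M x /\ nonzero_in M y /\ a = vadd x y).

Definition is_primary (d : nat) (M : vec d -> Prop) : Prop :=
  (exists x, nonzero_in M x) /\
  (forall x y, nonzero_in M x -> nonzero_in M y ->
     exists n : nat, exists z, M z /\ vsum (nseq n y) = vadd x z).

Definition is_factorization (d : nat) (M : vec d -> Prop) (x : vec d) (l : seq (vec d)) :=
  (forall a, a \in l -> is_atom M a) /\ vsum l = x.

(* BFM: every element is a sum of atoms, and each element has finitely many
   factorization lengths (a set of naturals is finite iff it is bounded). *)
Definition is_BFM (d : nat) (M : vec d -> Prop) : Prop :=
  forall x, M x ->
    (exists l, is_factorization M x l) /\
    (exists N : nat, forall l, is_factorization M x l -> (size l <= N)%N).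

(* n M^bullet \subseteq T + M *)
Definition nMbullet_sub (d : nat) (M : vec d -> Prop) (n : nat) (T : vec d -> Prop) : Prop :=
  forall l : seq (vec d), size l = n -> (forall x, x \in l -> nonzero_in M x) ->
    exists s z, T s /\ M z /\ vsum l = vadd s z.

Definition is_finitary (d : nat) (M : vec d -> Prop) : Prop :=
  is_BFM M /\
  exists (S : seq (vec d)) (n : nat),
    (forall s, s \in S -> M s) /\ (0 < n)%N /\ nMbullet_sub M n (fun s => s \in S).

Definition strongly_primary (d : nat) (M : vec d -> Prop) : Prop :=
  is_primary M /\ is_finitary M.

(* "M(x) <= N": some n <= N satisfies n M^bullet \subseteq x + M. *)
Definition calM_le (d : nat) (M : vec d -> Prop) (x : vec d) (N : nat) : Prop :=
  exists n : nat, (n <= N)%N /\ nMbullet_sub M n (fun s => s = x).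

(* calM(M) = sup over atoms a of calM(a) is finite. *)
Definition calM_finite (d : nat) (M : vec d -> Prop) : Prop :=
  exists N : nat, forall a, is_atom M a -> calM_le M a N.

Definition embed (R : realFieldType) (d : nat) (x : vec d) : 'rV[R]_d :=
  \row_i (((x i)%:R)%R).

Definition in_cone (R : realFieldType) (d : nat) (M : vec d -> Prop) (v : 'rV[R]_d) : Prop :=
  exists s : seq (R * vec d),
    (forall p, p \in s -> (0 <= p.1)%R /\ M p.2) /\
    v = (\sum_(p <- s) p.1 *: embed R p.2)%R.

Definition cone_dim (R : realFieldType) (d : nat) (M : vec d -> Prop) (n : nat) : Prop :=
  exists X : seq 'rV[R]_d,
    (forall v, v \in X -> in_cone M v) /\
    (forall v, in_cone M v -> v \in <<X>>%VS) /\
    \dim <<X>>%VS = n.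

Definition is_numerical (N : nat -> Prop) : Prop :=
  N 0%N /\ (forall x y, N x -> N y -> N (x + y)%N) /\
  exists b : nat, forall n, (b <= n)%N -> N n.

Definition iso_to_numerical (d : nat) (M : vec d -> Prop) : Prop :=
  exists (N : nat -> Prop) (f : vec d -> nat),
    is_numerical N /\
    (forall x, M x -> N (f x)) /\
    f (vzero d) = 0%N /\
    (forall x y, M x -> M y -> f (vadd x y) = (f x + f y)%N) /\
    (forall x y, M x -> M y -> f x = f y -> x = y) /\
    (forall n, N n -> exists x, M x /\ f x = n).

From HB Require Import structures.
From mathcomp Require Import all_boot all_order all_algebra.
From mathcomp Require Import zify.
From Stdlib Require Import Classical.
Set Implicit Arguments. Unset Strict Implicit. Unset Printing Implicit Defensive.

(* All three conditions are equivalent to the fact that M is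
   "collinear": all its elements lie on one ray of R^d, i.e. for all x, y in M
   and all coordinates i, j we have x_i y_j = x_j y_i.
   (a) => collinear: if M(M) is finite, then n y0 lies in a + M for every atom
     a, which bounds the coordinates of all atoms.  If the slopes x_i/x_j of
     two atoms differed, writing n b = a + m (primary) and factoring m into
     atoms produces an atom of strictly smaller slope than b; since atoms are
     bounded, such a descent must stop, so all atoms are collinear, and hence
     so is M (every element being a sum of atoms).
   collinear <=> (b): the cone of a collinear monoid is the line through any
     nonzero element; conversely a 1-dimensional cone is a line.
   collinear => (c): projecting on a coordinate k0 where M is nonzero and
     dividing by the gcd g of the values gives an injective morphism onto a
     submonoid of N containing two consecutive integers, hence numerical.
   (c) => (a): in a numerical monoid atoms are bounded, and any sum of enough
     nonzero elements exceeds an atom by an element beyond the conductor. *)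

Lemma vaddE d (x y : vec d) i : vadd x y i = x i + y i.
Proof. by rewrite ffunE. Qed.

Lemma vzeroE d i : vzero d i = 0.
Proof. by rewrite ffunE. Qed.

Lemma vsum_nseq d n (y : vec d) i : vsum (nseq n y) i = n * y i.
Proof. by elim: n => [|n IH] /=; rewrite ?vzeroE // vaddE IH mulSn. Qed.

Lemma nonzero_coord d (x : vec d) : x <> vzero d -> exists i, 0 < x i.
Proof.
move=> Hx; case: (pickP (fun i => 0 < x i)) => [i Hi|H]; first by exists i.
exfalso; apply: Hx; apply/ffunP => i; rewrite vzeroE.
by have := H i; case: (x i).
Qed.

(* Slopes.  [slt x1 x2 y1 y2] says that the slope x1/x2 is strictly smaller
   than y1/y2 (in the projective sense, so that no division is needed). *)
Definition slt (x1 x2 y1 y2 : nat) : bool := x1 * y2 < x2 * y1.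

Lemma slt_trans (x1 x2 y1 y2 z1 z2 : nat) :
  slt x1 x2 y1 y2 -> slt y1 y2 z1 z2 -> slt x1 x2 z1 z2.
Proof.
rewrite /slt => Hxy Hyz.
have Hy2 : 0 < y2 by case: y2 Hxy Hyz => //; rewrite muln0.
have Hx2 : 0 < x2 by case: x2 Hxy => //; rewrite mul0n.
rewrite -(ltn_pmul2r Hy2).
have : x1 * y2 * z2 <= x2 * y1 * z2 by rewrite leq_mul2r ltnW ?orbT.
have : x2 * (y1 * z2) < x2 * (y2 * z1) by rewrite ltn_pmul2l.
nia.
Qed.

Section Slopes.
Variables (d : nat) (i j : 'I_d).

Definition slope_lt (x y : vec d) : bool := slt (x i) (x j) (y i) (y j).

Lemma slope_lt_vsum (l : seq (vec d)) (b : vec d) :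
  slope_lt (vsum l) b -> exists2 c, c \in l & slope_lt c b.
Proof.
rewrite /slope_lt /slt; elim: l => [|c l IH] /=; first by rewrite !vzeroE.
rewrite !vaddE !mulnDl => H.
case: (ltnP (c i * b j) (c j * b i)) => Hc; first by exists c; rewrite ?inE ?eqxx.
have [c' Hc' Hlt] : exists2 c', c' \in l & c' i * b j < c' j * b i by apply: IH; lia.
by exists c' => //; rewrite inE Hc' orbT.
Qed.

Lemma slope_eq_vsum (l : seq (vec d)) (y : vec d) :
  (forall c, c \in l -> c i * y j = c j * y i) -> vsum l i * y j = vsum l j * y i.
Proof.
elim: l => [|c l IH] H /=; first by rewrite !vzeroE.
rewrite !vaddE !mulnDl H ?inE ?eqxx // IH // => c' Hc'.
by apply: H; rewrite inE Hc' orbT.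
Qed.

Definition slope_rank (B : nat) (b : vec d) : nat :=
  #|[set p : 'I_B.+1 * 'I_B.+1 | slt p.1 p.2 (b i) (b j)]|.

(* Lowering the slope, towards a vector with coordinates at most B, strictly
   decreases the rank: this is the measure making slope descents finite. *)
Lemma slope_rank_lt B (c b : vec d) :
  c i <= B -> c j <= B -> slope_lt c b -> slope_rank B c < slope_rank B b.
Proof.
move=> HciB HcjB Hcb; apply: proper_card; apply/properP; split.
  apply/subsetP => p; rewrite !inE => Hp; exact: slt_trans Hp Hcb.
have Hci : c i < B.+1 by rewrite ltnS.
have Hcj : c j < B.+1 by rewrite ltnS.
by exists (Ordinal Hci, Ordinal Hcj); rewrite !inE //= /slt mulnC ltnn.
Qed.

Lemma bounded_slope_descent (P : vec d -> Prop) (B : nat) :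
  (forall a, P a -> a i <= B /\ a j <= B) ->
  (forall a b, P a -> P b -> slope_lt b a -> exists c, P c /\ slope_lt c b) ->
  forall a b, P a -> P b -> ~~ slope_lt b a.
Proof.
move=> Hbd Hstep; suff H : forall k b, P b -> slope_rank B b < k ->
    forall a, P a -> ~~ slope_lt b a.
  by move=> a b Pa Pb; apply: (H (slope_rank B b).+1).
elim=> [//|k IH] b Pb Hk a Pa; apply/negP => Hba.
have [c [Pc Hcb]] := Hstep a b Pa Pb Hba.
have [HciB HcjB] := Hbd c Pc.
have Hrank : slope_rank B c < k by have := slope_rank_lt HciB HcjB Hcb; lia.
by have := IH c Pc Hrank b Pb; rewrite Hcb.
Qed.

End Slopes.

Definition collinear d (M : vec d -> Prop) : Prop :=
  forall x y, M x -> M y -> forall i j, x i * y j = x j * y i.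

Section FiniteCalMCollinear.
Variables (d : nat) (M : vec d -> Prop).
Hypotheses (HBFM : is_BFM M) (Hprim : is_primary M).

(* If M(M) is finite, the coordinates of atoms are bounded: every atom a
   satisfies n y0 = a + z for a fixed nonzero y0 and some n <= N. *)
Lemma atom_coords_bounded : calM_finite M ->
  exists B, forall a, is_atom M a -> forall k, a k <= B.
Proof.
move=> [N HN]; have [[y0 Hy0] _] := Hprim.
exists (N * \sum_(k < d) y0 k) => a Ha k.
have [n [Hn Hcover]] := HN a Ha.
have [s [z [-> [_ Heq]]]] : exists s z, s = a /\ M z /\ vsum (nseq n y0) = vadd s z.
  apply: Hcover; first by rewrite size_nseq.
  by move=> x; rewrite mem_nseq => /andP [_ /eqP ->].
have := congr1 (fun v : vec d => v k) Heq; rewrite vsum_nseq vaddE => Hk.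
have Hy : y0 k <= \sum_(k < d) y0 k by rewrite (bigD1 k) //= leq_addr.
have : n * y0 k <= N * \sum_(k < d) y0 k by apply: leq_mul.
lia.
Qed.

(* Slope descent among atoms: if slope(b) < slope(a), write n b = a + m with m
   in M; then slope(m) < slope(b), and some atom in a factorization of m
   has slope below that of b. *)
Lemma atom_slope_step (i j : 'I_d) a b : is_atom M a -> is_atom M b ->
  slope_lt i j b a -> exists c, is_atom M c /\ slope_lt i j c b.
Proof.
move=> Ha [Hb _] Hlt; have [_ Hdiv] := Hprim.
have [n [m [Mm Heq]]] := Hdiv a b Ha.1 Hb.
have Hi := congr1 (fun v : vec d => v i) Heq.
have Hj := congr1 (fun v : vec d => v j) Heq.
rewrite /= vsum_nseq vaddE in Hi; rewrite /= vsum_nseq vaddE in Hj.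
have [[l [Hl Hlm]] _] := HBFM Mm.
have Hm : slope_lt i j m b.
  have E : (a i + m i) * b j = (a j + m j) * b i by rewrite -Hi -Hj mulnAC.
  move: Hlt E; rewrite /slope_lt /slt !mulnDl; lia.
rewrite -Hlm in Hm; have [c Hc Hcb] := slope_lt_vsum Hm.
by exists c; split => //; apply: Hl.
Qed.

Lemma calM_finite_collinear : calM_finite M -> collinear M.
Proof.
move=> HcalM; have [B HB] := atom_coords_bounded HcalM.
have Hatoms : forall a b, is_atom M a -> is_atom M b -> forall i j,
    a i * b j = a j * b i.
  move=> a b Ha Hb i j.
  have Hno := bounded_slope_descent (P := is_atom M) (B := B)
    (fun a Ha => conj (HB a Ha i) (HB a Ha j)) (@atom_slope_step i j).
  have := Hno a b Ha Hb; have := Hno b a Hb Ha; rewrite /slope_lt /slt; lia.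
move=> x y Mx My i j.
have [[lx [Hlx <-]] _] := HBFM Mx.
have [[ly [Hly <-]] _] := HBFM My.
apply: slope_eq_vsum => b Hb.
have : vsum ly i * b j = vsum ly j * b i.
  by apply: slope_eq_vsum => c Hc; apply: Hatoms; [apply: Hly | apply: Hlx].
lia.
Qed.

End FiniteCalMCollinear.

Section NatSubmonoid.
Variable G : nat -> Prop.
Hypotheses (G0 : G 0) (GD : forall x y, G x -> G y -> G (x + y)).

Lemma natmul_closed k x : G x -> G (k * x).
Proof. by move=> Gx; elim: k => [|k IH]; rewrite ?mul0n // mulSn; apply: GD. Qed.

Definition has_gap (h : nat) : Prop := exists p q, G p /\ G q /\ p = q + h.

Lemma least_gap h : 0 < h -> has_gap h ->
  exists g, [/\ 0 < g, has_gap g & forall r, 0 < r < g -> ~ has_gap r].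
Proof.
elim: h {-2}h (leqnn h) => [|n IH] h Hhn Hh Hgap; first by lia.
case: (classic (exists r, 0 < r < h /\ has_gap r)) => [[r [/andP [Hr Hrh] Hgr]]|Hnone].
  by apply: (IH r) => //; lia.
exists h; split => // r Hr Hgr; apply: Hnone; by exists r.
Qed.

(* The smallest positive gap divides every element: writing e = k g + r, the
   elements e + k q and k p of G differ by r < g, so r = 0. *)
Lemma least_gap_dvd g : 0 < g -> has_gap g ->
  (forall r, 0 < r < g -> ~ has_gap r) -> forall e, G e -> g %| e.
Proof.
move=> Hg [p [q [Gp [Gq Hpq]]]] Hmin e Ge; rewrite /dvdn; apply/eqP.
have Hr : has_gap (e %% g).
  exists (e + e %/ g * q), (e %/ g * p); split; first by apply: GD => //; apply: natmul_closed.
  split; first by apply: natmul_closed.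
  by rewrite {1}(divn_eq e g) Hpq; lia.
case: (posnP (e %% g)) => // Hpos; exfalso; apply: (Hmin _ _ Hr).
by rewrite Hpos ltn_mod.
Qed.

Lemma consecutive_numerical q : G q -> G q.+1 -> forall n, q * q <= n -> G n.
Proof.
move=> Gq Gq1 n Hn; case: (posnP q) => [Hq0|Hq].
  by rewrite -(muln1 n); apply: natmul_closed; rewrite -Hq0.
have Hr : n %% q < q by rewrite ltn_mod.
have Ht : q <= n %/ q by rewrite leq_divRL.
have -> : n = (n %/ q - n %% q) * q + n %% q * q.+1 by rewrite {1}(divn_eq n q); nia.
by apply: GD; apply: natmul_closed.
Qed.

End NatSubmonoid.

(* A collinear submonoid, nonzero in the coordinate k0, is isomorphic to a
   numerical monoid via x |-> x_k0 / g, where g, the least positive difference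
   of two values x_k0, divides all of them; injectivity is collinearity. *)
Lemma collinear_iso_numerical d (M : vec d -> Prop) x0 k0 :
  is_submonoid M -> M x0 -> 0 < x0 k0 -> collinear M -> iso_to_numerical M.
Proof.
move=> [M0 MD] Mx0 Hk0 Hcol.
pose G n := exists x, M x /\ x k0 = n.
have G0 : G 0 by exists (vzero d); rewrite vzeroE.
have GD : forall m n, G m -> G n -> G (m + n).
  move=> _ _ [x [Mx <-]] [y [My <-]]; exists (vadd x y); split; first exact: MD.
  by rewrite vaddE.
have [g [Hg Hgap Hmin]] : exists g, [/\ 0 < g, has_gap G g &
    forall r, 0 < r < g -> ~ has_gap G r].
  by apply: (least_gap Hk0); exists (x0 k0), 0; split; [exists x0 | split].
have Hdvd := least_gap_dvd G0 GD Hg Hgap Hmin.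
have HdvdM : forall x, M x -> g %| x k0 by move=> x Mx; apply: Hdvd; exists x.
pose f (x : vec d) := x k0 %/ g.
pose N n := exists x, M x /\ f x = n.
have fD : forall x y, M x -> M y -> f (vadd x y) = f x + f y.
  by move=> x y Mx My; rewrite /f vaddE divnDl // HdvdM.
have N0 : N 0 by exists (vzero d); rewrite /f vzeroE div0n.
have ND : forall m n, N m -> N n -> N (m + n).
  move=> _ _ [x [Mx <-]] [y [My <-]]; exists (vadd x y); split; first exact: MD.
  by rewrite fD.
have [Q [NQ NQ1]] : exists Q, N Q /\ N Q.+1.
  have [p [q [[xp [Mxp Hxp]] [[xq [Mxq Hxq]] Hpq]]]] := Hgap.
  exists (f xq); split; first by exists xq.
  exists xp; split => //; rewrite /f Hxp Hpq -Hxq divnDl ?divnn ?Hg ?addn1 //.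
  exact: HdvdM.
exists N, f; split; last split; last split; last split; last split.
- by split; [|split; [|exists (Q * Q); exact: consecutive_numerical]].
- by move=> x Mx; exists x.
- by rewrite /f vzeroE div0n.
- exact: fD.
- move=> x y Mx My Hf; apply/ffunP => k.
  have Hxy : x k0 = y k0 by rewrite -(divnK (HdvdM x Mx)) -(divnK (HdvdM y My)) -/(f x) Hf.
  apply/eqP; rewrite -(eqn_pmul2r Hk0) (Hcol _ _ Mx Mx0 k k0).
  by rewrite (Hcol _ _ My Mx0 k k0) Hxy.
- by [].
Qed.

Section IsoNumerical.
Variables (d : nat) (M : vec d -> Prop) (N : nat -> Prop) (f : vec d -> nat) (b : nat).
Hypotheses (M0 : M (vzero d)) (MD : forall x y, M x -> M y -> M (vadd x y))
  (Hcond : forall n, b <= n -> N n) (f0 : f (vzero d) = 0)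
  (fD : forall x y, M x -> M y -> f (vadd x y) = f x + f y)
  (finj : forall x y, M x -> M y -> f x = f y -> x = y)
  (fsurj : forall n, N n -> exists x, M x /\ f x = n).

Lemma iso_attains n : b <= n -> exists x, M x /\ f x = n.
Proof. by move=> Hn; apply: fsurj; apply: Hcond. Qed.

Lemma iso_pos x : nonzero_in M x -> 0 < f x.
Proof.
move=> [Mx Hx]; rewrite lt0n; apply/eqP => H; apply: Hx.
by apply: finj => //; rewrite H f0.
Qed.

Lemma iso_nonzero x : M x -> 0 < f x -> nonzero_in M x.
Proof. by move=> Mx Hx; split => // Hx0; move: Hx; rewrite Hx0 f0. Qed.

Lemma iso_vsum l : (forall x, x \in l -> M x) ->
  M (vsum l) /\ f (vsum l) = \sum_(x <- l) f x.
Proof.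
elim: l => [|x l IH] Hl /=; first by rewrite big_nil f0.
have Mx : M x by apply: Hl; rewrite inE eqxx.
have [Ml Hfl] := IH (fun y Hy => Hl y ltac:(by rewrite inE Hy orbT)).
by rewrite big_cons; split; [apply: MD | rewrite fD // Hfl].
Qed.

(* Atoms are small: an element a with f a > 2 (b + 1) splits as e + w with
   f e = b + 1 and f w = f a - (b + 1), both beyond the conductor. *)
Lemma iso_atom_bound a : is_atom M a -> f a <= 2 * b.+1.
Proof.
move=> [[Ma _] Hna]; rewrite leqNgt; apply/negP => Hlt; apply: Hna.
have [e [Me Hfe]] := iso_attains (leqnSn b).
have [w [Mw Hfw]] := @iso_attains (f a - b.+1) ltac:(lia).
exists e, w; split; first by apply: iso_nonzero; rewrite ?Hfe.
split; first by apply: iso_nonzero; rewrite ?Hfw //; lia.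
by apply: finj => //; [apply: MD | rewrite fD // Hfe Hfw; lia].
Qed.

(* Hence 3 (b + 1) nonzero elements always sum to an element of a + M. *)
Lemma iso_calM_finite : calM_finite M.
Proof.
exists (3 * b.+1) => a Ha; exists (3 * b.+1); split => // l Hsz Hl.
have [Ml Hfl] := iso_vsum (fun x Hx => (Hl x Hx).1).
have Hge : size l <= \sum_(x <- l) f x.
  rewrite -sum1_size big_seq [X in _ <= X]big_seq; apply: leq_sum => x Hx.
  exact: iso_pos (Hl x Hx).
rewrite -Hfl Hsz in Hge.
have Hfa := iso_atom_bound Ha; have Ma := Ha.1.1.
have [z [Mz Hfz]] := @iso_attains (f (vsum l) - f a) ltac:(lia).
exists a, z; split => //; split => //.
by apply: finj => //; [apply: MD | rewrite fD // Hfz; lia].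
Qed.

End IsoNumerical.

Lemma iso_numerical_calM_finite d (M : vec d -> Prop) :
  is_submonoid M -> iso_to_numerical M -> calM_finite M.
Proof.
move=> [M0 MD] [N [f [[_ [_ [b Hb]]] [_ [f0 [fD [finj fsurj]]]]]]].
exact: (iso_calM_finite M0 MD Hb f0 fD finj fsurj).
Qed.

Section Cone.
Import GRing.Theory Num.Theory.
Local Open Scope ring_scope.
Variables (R : realFieldType) (d : nat) (M : vec d -> Prop).

Lemma embed_in_cone x : M x -> @in_cone R d M (embed R x).
Proof.
move=> Mx; exists [:: (1, x)]; split.
  by move=> p; rewrite inE => /eqP -> /=; split.
by rewrite big_cons big_nil addr0 scale1r.
Qed.

(* A collinear monoid spans the line through any of its nonzero elements:
   each embed y is the multiple (y_k0 / x0_k0) of embed x0. *)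
Lemma collinear_cone_dim1 x0 k0 :
  M x0 -> (0 < x0 k0)%N -> collinear M -> @cone_dim R d M 1.
Proof.
move=> Mx0 Hk0 Hcol; exists [:: embed R x0]; split.
  by move=> v; rewrite inE => /eqP ->; apply: embed_in_cone.
have Hx : (x0 k0)%:R != 0 :> R by rewrite pnatr_eq0 -lt0n.
have Hnz : embed R x0 != 0.
  by apply: contraNneq Hx => /matrixP /(_ 0 k0); rewrite !mxE => ->.
split; last by rewrite span_seq1 dim_vline Hnz.
move=> v [s [Hs ->]]; rewrite span_seq1 big_seq; apply: memv_suml => p Hp.
have [_ Mp] := Hs p Hp; apply: memvZ.
have -> : embed R p.2 = ((p.2 k0)%:R / (x0 k0)%:R) *: embed R x0.
  apply/matrixP => i j; rewrite !mxE; apply: (mulIf Hx).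
  by rewrite mulrAC divfK // -!natrM (Hcol _ _ Mp Mx0 j k0) mulnC.
exact/memvZ/memv_line.
Qed.

(* A cone of dimension 1 is a line <[w]>, so embed x = a w and embed y = b w,
   whence x_i y_j = a b w_i w_j = x_j y_i. *)
Lemma cone_dim1_collinear : @cone_dim R d M 1 -> collinear M.
Proof.
move=> [X [_ [HX Hdim]]]; set U := <<X>>%VS in HX Hdim.
have HU0 : U != 0%VS by rewrite -dimv_eq0 Hdim.
have HUw : U = <[vpick U]>%VS.
  apply/eqP; rewrite eq_sym eqEdim -memvE memv_pick Hdim /= dim_vline.
  by rewrite vpick0 HU0.
have Hline : forall x, M x -> exists a, embed R x = a *: vpick U.
  by move=> x Mx; apply/vlineP; rewrite -HUw; apply/HX/embed_in_cone.
have Hcoord : forall (z : vec d) c k, embed R z = c *: vpick U ->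
    (z k)%:R = c * vpick U 0 k.
  by move=> z c k /matrixP /(_ 0 k); rewrite !mxE.
move=> x y Mx My i j; have [a Ha] := Hline x Mx; have [b Hb] := Hline y My.
apply/eqP; rewrite -(eqr_nat R) !natrM !(Hcoord _ _ _ Ha) !(Hcoord _ _ _ Hb).
by rewrite mulrACA [X in _ == X]mulrACA [vpick U 0 j * _]mulrC.
Qed.

End Cone.

Theorem mainTheorem19 (R : realFieldType) (d : nat) (M : vec d -> Prop) :
  is_submonoid M -> strongly_primary M ->
  (calM_finite M <-> cone_dim R M 1) /\ (calM_finite M <-> iso_to_numerical M).
Proof.
move=> Hsub [Hprim [HBFM _]].
have [[x0 [Mx0 Hx0]] _] := Hprim.
have [k0 Hk0] := nonzero_coord Hx0.
have col_a := calM_finite_collinear HBFM Hprim.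
have col_c := collinear_iso_numerical Hsub Mx0 Hk0.
have c_a := iso_numerical_calM_finite Hsub.
split; split.
- by move=> Ha; apply: (collinear_cone_dim1 R Mx0 Hk0 (col_a Ha)).
- by move=> Hb; apply/c_a/col_c/(cone_dim1_collinear Hb).
- by move=> Ha; apply/col_c/col_a.
- exact: c_a.
Qed.
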